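(* Let $m\in\mathbb{N}$ and $V\in H_{+}^{-m}$ be a 1-periodic complex-valued distribution. Define on $L_2(0,1)$ the forms $t_V^{\pm}[u,v]=\langle V(x)u,v\rangle_{\pm}$ and $\tau_\pm[u,v]=\langle D_\pm^{2m}u,v\rangle_\pm$, both with domain $H_\pm^m$. Then $t_V^{\pm}$ is $\tau_\pm$-bounded with relative bound zero: for every $\delta>0$ there exists a constant $C_\delta\ge0$ such that $$|t_V^{\pm}[u]|\le\delta\,\tau_\pm[u]+C_\delta\|u\|^2_{L_2(0,1)},\qquad u\in H_\pm^m.$$
   Context: For $s\in\mathbb{R}$, $H_{+}^{s}$ is the space of formal series $f=\sum_{k\in\mathbb{Z}}\widehat f(2k)e^{i2k\pi x}$ with $\|f\|_{H_+^s}^2=\sum_k\langle 2k\rangle^{2s}|\widehat f(2k)|^2<\infty$, and $H_{-}^{s}$ is the space of formal series $f=\sum_{k}\widehat f(2k+1)e^{i(2k+1)\pi x}$ with $\|f\|_{H_-^s}^2=\sum_k\langle 2k+1\rangle^{2s}|\widehat f(2k+1)|^2<\infty$, where $\langle k\rangle=1+|k|$; $H_\pm^0=L_2(0,1)$. $\langle\cdot,\cdot\rangle_{\pm}$ is the pairing between $H_\pm^{s}$ and $H_\pm^{-s}$ extending the $L_2(0,1)$ inner product. $D_\pm^{2m}$ acts as multiplication by $(n\pi)^{2m}$ on the mode $e^{in\pi x}$. For $u\in H_\pm^{m}$, $V(x)u=\sum_n\big(\sum_j\widehat V(n-j)\widehat u(j)\big)e^{in\pi x}\in H_\pm^{-m}$.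 For a form $t$, $t[u]:=t[u,u]$. *)

From HB Require Import structures.
From mathcomp Require Import all_boot all_order all_algebra.
From mathcomp Require Import all_classical all_reals all_analysis.
From mathcomp Require Export complex.
Export Order.TTheory GRing.Theory Num.Theory.
Export numFieldNormedType.Exports.
Set Implicit Arguments. Unset Strict Implicit. Unset Printing Implicit Defensive.
Local Open Scope ring_scope.

(* A 1-periodic (formal) series f = sum_n fhat(n) e^{i n pi x} is represented
   by its coefficient function  fhat : int -> R[i]  (n is the frequency index,
   i.e. fhat n is the coefficient of e^{i n pi x}). *)

Section Defs.
Variable R : realType.
Local Notation C := R[i].

Definition jb (n : int) : C := ((1 + `|n|)%:~R : C).

Definition zpsum (a : int -> C) (N : nat) : C :=
  \sum_(i < (2 * N).+1) a (i%:Z - N%:Z).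

Definition zsum (a : int -> C) : C := limn (zpsum a : nat -> C^o).

(* parity class: [neg = false] is "+" (even frequencies 2k),
                 [neg = true]  is "-" (odd frequencies 2k+1) *)
Definition in_class (neg : bool) (n : int) : bool := odd (absz n) == neg.

Definition Hs (neg : bool) (s : int) (f : int -> C) : Prop :=
  (forall n, ~~ in_class neg n -> f n = 0) /\
  cvgn (zpsum (fun n => jb n ^ (2 * s) * `|f n| ^+ 2) : nat -> C^o).

(* pairing <f, g>_{+-} extending the L2(0,1) inner product
   (the e^{i n pi x}, n in one parity class, are orthonormal in L2(0,1)) *)
Definition pairing (f g : int -> C) : C := zsum (fun n => f n * (g n)^*).

Definition mulV (V u : int -> C) : int -> C :=
  fun n => zsum (fun j => V (n - j) * u j).

(* D^{2m} acts as multiplication by (n pi)^{2m} on e^{i n pi x} *)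
Definition D2m (m : nat) (u : int -> C) : int -> C :=
  fun n => real_complex R ((n%:~R * pi) ^+ (2 * m)) * u n.

Definition tV (V u : int -> C) : C := pairing (mulV V u) u.
Definition tau (m : nat) (u : int -> C) : C := pairing (D2m m u) u.
Definition L2norm2 (u : int -> C) : C := pairing u u.

End Defs.

From mathcomp Require Import all_boot all_order all_algebra.
From mathcomp Require Import all_classical all_reals all_analysis.
From mathcomp Require Import complex.
From mathcomp Require Import zify ring lra.
Import Order.TTheory GRing.Theory Num.Theory.
Import numFieldNormedType.Exports.

Set Implicit Arguments.
Unset Strict Implicit.
Unset Printing Implicit Defensive.
Local Open Scope ring_scope.

(* With U = |u^| and W = |V^|, |t_V[u]| is bounded by the double sums
   sum_{n,j} W(n-j) U(j) U(n).  Cut W at a frequency N0.  The finitely many low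
   modes of W act boundedly on l^2 and cost only C ||u||^2.  For the tail,
   <n-j>^m <= 2^m (<n>^m + <j>^m) moves the weight of the H^{-m} symbol onto one
   factor of u while the other factor keeps a spare <.>^{-1} (this is where
   m >= 1 enters); since sum <k>^{-2} <= 3, AM-GM bounds the tail by
   2^{m+1} (3 t + eps / t) ||u||_{H^m}^2, with eps the H^{-m} norm of the tail.
   Taking t small and then N0 with eps = t^2 gives delta ||u||_{H^m}^2, and
   ||u||_{H^m}^2 <= 4^m (tau[u] + ||u||^2). *)

Definition zrange (N : nat) : seq int := [seq i%:Z - N%:Z | i <- iota 0 (2 * N).+1].

Arguments zrange : simpl never.

Lemma mem_zrange N n : (n \in zrange N) = (absz n <= N)%N.
Proof.
apply/mapP/idP => [ [k] | le_nN].
  by rewrite mem_iota => /andP[_ ?] ->; lia.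
by exists (absz (n + N%:Z)); [rewrite mem_iota; lia | lia].
Qed.

Lemma zrange_uniq N : uniq (zrange N).
Proof. by rewrite map_inj_uniq ?iota_uniq // => i j /=; lia. Qed.

Lemma zrange_subset N M : (N <= M)%N -> {subset zrange N <= zrange M}.
Proof. by move=> le_NM n; rewrite !mem_zrange => ?; lia. Qed.

Lemma zrange0 : zrange 0 = [:: 0].
Proof. by []. Qed.

Lemma perm_zrangeS N : perm_eq (zrange N.+1) (N.+1%:Z :: - N.+1%:Z :: zrange N).
Proof.
apply: uniq_perm; first exact: zrange_uniq.
  have N_out : N.+1%:Z \notin zrange N by rewrite mem_zrange; lia.
  have NN_out : - N.+1%:Z \notin zrange N by rewrite mem_zrange; lia.
  rewrite (cons_uniq N.+1%:Z) (cons_uniq (- N.+1%:Z)) zrange_uniq (in_cons (- N.+1%:Z)).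
  by rewrite negb_or N_out NN_out !andbT; apply/eqP; lia.
move=> n; rewrite mem_zrange (in_cons N.+1%:Z) (in_cons (- N.+1%:Z)) mem_zrange.
by apply/idP/idP => ?; lia.
Qed.

Lemma zpsumE (R : realType) (a : int -> R[i]) N : zpsum a N = \sum_(n <- zrange N) a n.
Proof.
by rewrite /zpsum big_map -(big_mkord xpredT (fun i => a (i%:Z - N%:Z))) /index_iota subn0.
Qed.

Section NonnegSums.
Variable R : numDomainType.
Implicit Types (f a b : int -> R) (s t : seq int).

Definition zsum_bounded f (K : R) := forall N, \sum_(n <- zrange N) f n <= K.

Lemma sum_if_mem s t f : uniq s -> uniq t -> {subset s <= t} ->
  \sum_(x <- t) (if x \in s then f x else 0) = \sum_(x <- s) f x.
Proof.
move=> s_uniq t_uniq le_st; rewrite -big_mkcond -big_filter; apply: perm_big.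
apply: uniq_perm; rewrite ?filter_uniq // => x.
by rewrite mem_filter; case: (boolP (x \in s)) => // /le_st ->.
Qed.

Lemma sum_subset_le s t f : uniq s -> uniq t -> {subset s <= t} ->
  (forall x, 0 <= f x) -> \sum_(x <- s) f x <= \sum_(x <- t) f x.
Proof.
move=> s_uniq t_uniq le_st f_ge0; rewrite -(@sum_if_mem s t f) //.
by apply: ler_sum => x _; case: ifP.
Qed.

Lemma zsum_bounded_ge0 f K : (forall x, 0 <= f x) -> zsum_bounded f K -> 0 <= K.
Proof. by move=> f_ge0 fK; apply: le_trans (fK 0%N); exact: sumr_ge0. Qed.

Lemma zsum_bounded_comp f (g : int -> int) (c : nat) K :
  injective g -> (forall n, (absz (g n) <= absz n + c)%N) ->
  (forall x, 0 <= f x) -> zsum_bounded f K -> zsum_bounded (f \o g) K.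
Proof.
move=> g_inj g_le f_ge0 fK N; rewrite -(big_map g xpredT f).
apply: le_trans (fK (N + c)%N); apply: sum_subset_le; rewrite ?zrange_uniq //.
  by rewrite map_inj_uniq // zrange_uniq.
move=> k /mapP[n]; rewrite !mem_zrange => le_nN ->.
by apply: leq_trans (g_le n) _; rewrite leq_add2r.
Qed.

Lemma sum_conv_sym_le f a Kf Ka N M :
  (forall x, 0 <= f x) -> (forall x, 0 <= a x) -> zsum_bounded f Kf -> zsum_bounded a Ka ->
  \sum_(n <- zrange N) \sum_(j <- zrange M) f (n - j) * (a j + a n) <= 2 * (Kf * Ka).
Proof.
move=> f_ge0 a_ge0 fK aK.
have Kf_ge0 := zsum_bounded_ge0 f_ge0 fK.
have shift_bounded c : zsum_bounded (fun n => f (n - c)) Kf.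
  by apply: (@zsum_bounded_comp _ (fun n => n - c) (absz c)) => // [x y /= | n]; lia.
have flip_bounded c : zsum_bounded (fun n => f (c - n)) Kf.
  by apply: (@zsum_bounded_comp _ (fun n => c - n) (absz c)) => // [x y /= | n]; lia.
have weighted s (F : int -> R) : (forall x, F x <= Kf) ->
    \sum_(x <- s) a x * F x <= (\sum_(x <- s) a x) * Kf.
  by move=> FK; rewrite mulr_suml; apply: ler_sum => x _; rewrite ler_wpM2l.
rewrite mulr2n mulrDl mul1r.
under eq_bigr do under eq_bigr do rewrite mulrDr.
under eq_bigr do rewrite big_split /=.
rewrite big_split /=; apply: lerD.
  rewrite exchange_big /=.
  under eq_bigr do under eq_bigr do rewrite mulrC.
  under eq_bigr do rewrite -mulr_sumr.
  apply: le_trans (weighted _ _ (fun j => shift_bounded j N)) _.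
  by rewrite mulrC ler_wpM2l.
under eq_bigr do under eq_bigr do rewrite mulrC.
under eq_bigr do rewrite -mulr_sumr.
apply: le_trans (weighted _ _ (fun n => flip_bounded n M)) _.
by rewrite mulrC ler_wpM2l.
Qed.

Lemma sum_prod_sym_le a b Ka Kb N M :
  (forall x, 0 <= a x) -> (forall x, 0 <= b x) -> zsum_bounded a Ka -> zsum_bounded b Kb ->
  \sum_(n <- zrange N) \sum_(j <- zrange M) (a j * b n + a n * b j) <= 2 * (Ka * Kb).
Proof.
move=> a_ge0 b_ge0 aK bK.
have prod_le (c d : int -> R) Kc Kd : (forall x, 0 <= c x) -> (forall x, 0 <= d x) ->
    zsum_bounded c Kc -> zsum_bounded d Kd ->
    \sum_(n <- zrange N) \sum_(j <- zrange M) c n * d j <= Kc * Kd.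
  move=> c_ge0 d_ge0 cK dK; under eq_bigr do rewrite -mulr_sumr.
  by rewrite -mulr_suml ler_pM ?sumr_ge0.
under eq_bigr do rewrite big_split /=.
rewrite big_split mulr2n mulrDl mul1r; apply: lerD; last exact: prod_le.
under eq_bigr do under eq_bigr do rewrite mulrC.
by rewrite mulrC; exact: prod_le.
Qed.

End NonnegSums.

Section Weight.
Context {R : realFieldType}.

Definition jbr (n : int) : R := (absz n)%:R + 1.

Lemma jbr_ge1 n : 1 <= jbr n.
Proof. by rewrite /jbr lerDr. Qed.

Lemma jbr_gt0 n : 0 < jbr n.
Proof. exact: lt_le_trans ltr01 (jbr_ge1 n). Qed.

Lemma jbr_ge0 n : 0 <= jbr n.
Proof. exact: ltW (jbr_gt0 n). Qed.

Lemma jbr_subr_leD n j : jbr (n - j) <= jbr n + jbr j.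
Proof.
have : (absz (n - j))%:R <= (absz n + absz j)%:R :> R by rewrite ler_nat; lia.
by rewrite /jbr natrD; lra.
Qed.

Lemma jbr_subr_leM n j : jbr (n - j) <= jbr n * jbr j.
Proof. by rewrite /jbr !natr1 -natrM ler_nat; nia. Qed.

Lemma zsum_bounded_jbr_invsqr : zsum_bounded (fun k => (jbr k ^+ 2)^-1) 3.
Proof.
suff tele N : \sum_(k <- zrange N) (jbr k ^+ 2)^-1 <= 3 - 2 / (N%:R + 1).
  by move=> N; apply: le_trans (tele N) _; rewrite gerBl divr_ge0 // addr_ge0.
elim: N => [|N IH].
  by rewrite zrange0 big_seq1 /jbr /= add0r expr1n invr1; lra.
rewrite (perm_big _ (perm_zrangeS N)) 2!big_cons /= addrA.
set x := N%:R : R.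
have x_ge0 : 0 <= x by rewrite /x ler0n.
have [-> ->] : jbr N.+1%:Z = x + 2 /\ jbr (- N.+1%:Z) = x + 2.
  by rewrite /jbr abszN /= -natr1 -/x; split; lra.
have -> : N.+1%:R = x + 1 :> R by rewrite -natr1.
have -> : x + 1 + 1 = x + 2 by lra.
move: IH; rewrite -/x.
set a := (x + 1)^-1; set b := (x + 2)^-1.
have -> : ((x + 2) ^+ 2)^-1 = b * b by rewrite /b -exprVn expr2.
have ab : a - b = a * b by rewrite /a /b; field; lra.
have b_le_a : b <= a by rewrite /a /b lef_pV2 ?posrE; lra.
have : b * b <= a * b by rewrite ler_wpM2r // ltW // /b invr_gt0; lra.
lra.
Qed.

End Weight.


Section Inequalities.
Variable R : realFieldType.

Lemma mulr_le_amgm (a b t : R) : 0 < t -> a * b <= t * a ^+ 2 + t^-1 * b ^+ 2.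
Proof.
move=> t_gt0; have tV : t * t^-1 = 1 by rewrite divff // gt_eqF.
have : 0 <= t^-1 * (t * a - b) ^+ 2 by rewrite mulr_ge0 ?sqr_ge0 // invr_ge0 ltW.
have : 0 <= (t * a - b) ^+ 2 by exact: sqr_ge0.
nra.
Qed.

Lemma exprD_le2X (a b : R) n : 0 <= a -> 0 <= b ->
  (a + b) ^+ n <= 2 ^+ n * (a ^+ n + b ^+ n).
Proof.
move=> a_ge0 b_ge0; wlog le_ba : a b a_ge0 b_ge0 / b <= a => [hw|].
  have [/hw|/ltW/hw] := leP b a; first exact.
  by rewrite addrC [b ^+ n + _]addrC; exact.
apply: le_trans (_ : (2 * a) ^+ n <= _).
  by apply: lerXn2r; rewrite ?nnegrE ?addr_ge0 ?mulr_ge0 //; lra.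
by rewrite exprMn ler_wpM2l ?exprn_ge0 // lerDl exprn_ge0.
Qed.

Lemma mulr_le_amgm_weighted (x v y w Y t : R) :
  0 <= x -> 0 <= v -> 0 <= y -> 0 < w -> w * y <= Y -> 0 < t ->
  v * x * y <= t * (x ^+ 2 / w ^+ 2) + t^-1 * (v ^+ 2 * Y ^+ 2).
Proof.
move=> x_ge0 v_ge0 y_ge0 w_gt0 wyY t_gt0.
have := mulr_le_amgm (x / w) (v * Y) t_gt0; rewrite expr_div_n exprMn; apply: le_trans.
have -> : v * x * y = x / w * (v * (w * y)) by field; rewrite gt_eqF.
by apply: ler_wpM2l; [rewrite divr_ge0 // ltW | apply: ler_wpM2l].
Qed.

Lemma highfreq_term_le (m : nat) (v x y wx wy wk t : R) : (0 < m)%N ->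
  0 <= v -> 0 <= x -> 0 <= y -> 1 <= wx -> 1 <= wy -> 0 <= wk -> wk <= wx + wy -> 0 < t ->
  v * wk ^+ m * x * y <=
  2 ^+ m * (t * ((wx ^+ m * x) ^+ 2 / wy ^+ 2 + (wy ^+ m * y) ^+ 2 / wx ^+ 2)
            + t^-1 * (v ^+ 2 * ((wx ^+ m * x) ^+ 2 + (wy ^+ m * y) ^+ 2))).
Proof.
move=> m_gt0 v_ge0 x_ge0 y_ge0 wx_ge1 wy_ge1 wk_ge0 wk_le t_gt0.
set X := wx ^+ m * x; set Y := wy ^+ m * y.
have wkX : wk ^+ m <= 2 ^+ m * (wx ^+ m + wy ^+ m).
  apply: (le_trans (y := (wx + wy) ^+ m)); last by apply: exprD_le2X; lra.
  by apply: lerXn2r; rewrite ?nnegrE //; lra.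
have hX : v * X * y <= t * (X ^+ 2 / wy ^+ 2) + t^-1 * (v ^+ 2 * Y ^+ 2).
  apply: mulr_le_amgm_weighted; rewrite ?mulr_ge0 ?exprn_ge0 //; try lra.
  by rewrite /Y ler_wpM2r // ler_eXnr.
have hY : v * Y * x <= t * (Y ^+ 2 / wx ^+ 2) + t^-1 * (v ^+ 2 * X ^+ 2).
  apply: mulr_le_amgm_weighted; rewrite ?mulr_ge0 ?exprn_ge0 //; try lra.
  by rewrite /X ler_wpM2r // ler_eXnr.
apply: (le_trans (y := 2 ^+ m * (v * X * y + v * Y * x))).
  have -> : 2 ^+ m * (v * X * y + v * Y * x) = v * x * y * (2 ^+ m * (wx ^+ m + wy ^+ m)).
    by rewrite /X /Y; ring.
  have -> : v * wk ^+ m * x * y = v * x * y * wk ^+ m by ring.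
  by rewrite ler_wpM2l // !mulr_ge0.
rewrite ler_wpM2l ?exprn_ge0 //.
have -> : t * (X ^+ 2 / wy ^+ 2 + Y ^+ 2 / wx ^+ 2) + t^-1 * (v ^+ 2 * (X ^+ 2 + Y ^+ 2)) =
    (t * (X ^+ 2 / wy ^+ 2) + t^-1 * (v ^+ 2 * Y ^+ 2)) +
    (t * (Y ^+ 2 / wx ^+ 2) + t^-1 * (v ^+ 2 * X ^+ 2)) by ring.
exact: lerD.
Qed.

End Inequalities.

Section NonnegSeries.
Variable R : realType.
Implicit Types f : int -> R.

Lemma zsum_bounded_cvg f K : (forall x, 0 <= f x) -> zsum_bounded f K ->
  cvgn (fun N => \sum_(n <- zrange N) f n) /\
  zsum_bounded f (limn (fun N => \sum_(n <- zrange N) f n)).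
Proof.
move=> f_ge0 fK.
have incr : nondecreasing_seq (fun N => \sum_(n <- zrange N) f n).
  by move=> N M le_NM; apply: sum_subset_le; rewrite ?zrange_uniq //; exact: zrange_subset.
have cv : cvgn (fun N => \sum_(n <- zrange N) f n).
  by apply: nondecreasing_is_cvgn => //; exists K => _ [N _ <-]; exact: fK.
by split => //; exact: nondecreasing_cvgn_le.
Qed.

Lemma zsum_tail_small f K eps : (forall x, 0 <= f x) -> zsum_bounded f K -> 0 < eps ->
  exists N0, zsum_bounded (fun k => if k \in zrange N0 then 0 else f k) eps.
Proof.
move=> f_ge0 fK eps_gt0.
have [cv le_lim] := zsum_bounded_cvg f_ge0 fK.
set l := limn _ in le_lim.
have [N0 _ HN0] := (cvgrPdist_lt _ _).1 cv _ eps_gt0.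
have near_l := HN0 N0 (leqnn N0); rewrite /= in near_l.
exists N0 => N.
have [le_NN0|lt_N0N] := leqP N N0.
  by rewrite big1_seq ?ltW // => k /andP[_ /(zrange_subset le_NN0) ->].
have -> : \sum_(k <- zrange N) (if k \in zrange N0 then 0 else f k) =
    \sum_(k <- zrange N) f k - \sum_(k <- zrange N) (if k \in zrange N0 then f k else 0).
  by rewrite -sumrB; apply: eq_bigr => k _; case: ifP => _; rewrite ?subrr ?subr0.
rewrite sum_if_mem ?zrange_uniq //; last exact: zrange_subset (ltnW lt_N0N).
have := le_lim N; have := ler_norm (l - \sum_(n <- zrange N0) f n).
by rewrite /l; lra.
Qed.

End NonnegSeries.

Section FormBound.
Variables (R : realType) (m : nat).
Local Notation w := (@jbr R).

Lemma conv_row_bounded (W U : int -> R) KV X n :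
  (forall k, 0 <= W k) -> (forall k, 0 <= U k) ->
  zsum_bounded (fun k => (W k / w k ^+ m) ^+ 2) KV ->
  zsum_bounded (fun k => (w k ^+ m * U k) ^+ 2) X ->
  zsum_bounded (fun j => W (n - j) * U j) (w n ^+ m * (KV + X)).
Proof.
move=> W_ge0 U_ge0 WK UX N.
have wX_gt0 k : 0 < w k ^+ m by rewrite exprn_gt0 // jbr_gt0.
have pointwise j : W (n - j) * U j <=
    w n ^+ m * ((W (n - j) / w (n - j) ^+ m) ^+ 2 + (w j ^+ m * U j) ^+ 2).
  set a := W (n - j) / w (n - j) ^+ m; set b := w j ^+ m * U j.
  have -> : W (n - j) = a * w (n - j) ^+ m by rewrite /a divfK // gt_eqF.
  have peetre : w (n - j) ^+ m <= w n ^+ m * w j ^+ m.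
    rewrite -exprMn; apply: lerXn2r; rewrite ?nnegrE ?mulr_ge0 ?jbr_ge0 //.
    exact: jbr_subr_leM.
  apply: (le_trans (y := w n ^+ m * (a * b))).
    have -> : w n ^+ m * (a * b) = a * U j * (w n ^+ m * w j ^+ m) by rewrite /b; ring.
    have -> : a * w (n - j) ^+ m * U j = a * U j * w (n - j) ^+ m by ring.
    by rewrite ler_wpM2l // mulr_ge0 // divr_ge0 // ltW.
  rewrite ler_wpM2l ?exprn_ge0 ?jbr_ge0 //.
  by have := mulr_le_amgm a b ltr01; rewrite invr1 !mul1r.
apply: le_trans (ler_sum _ (fun j _ => pointwise j)) _.
rewrite -mulr_sumr big_split /= ler_wpM2l ?exprn_ge0 ?jbr_ge0 // lerD //.
apply: (zsum_bounded_comp (f := fun k => (W k / w k ^+ m) ^+ 2) (c := absz n)) => //.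
- by move=> x y /=; lia.
- by move=> j; lia.
- by move=> k; exact: sqr_ge0.
Qed.

Hypothesis m_gt0 : (0 < m)%N.

Section FixedVector.
Variable U : int -> R.
Hypothesis U_ge0 : forall n, 0 <= U n.

Lemma lowfreq_sum_le (f : int -> R) Kf L N M :
  (forall k, 0 <= f k) -> zsum_bounded f Kf -> zsum_bounded (fun n => U n ^+ 2) L ->
  \sum_(n <- zrange N) \sum_(j <- zrange M) f (n - j) * U j * U n <= 2 * (Kf * L).
Proof.
move=> f_ge0 fK UL.
apply: le_trans (sum_conv_sym_le N M f_ge0 (fun n => sqr_ge0 (U n)) fK UL).
apply: ler_sum => n _; apply: ler_sum => j _; rewrite -mulrA ler_wpM2l //.
by have := sqr_ge0 (U j - U n); have := U_ge0 j; have := U_ge0 n; nra.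
Qed.

Lemma highfreq_sum_le (v : int -> R) eps X t N M : (forall k, 0 <= v k) -> 0 < t ->
  zsum_bounded (fun k => v k ^+ 2) eps -> zsum_bounded (fun n => (w n ^+ m * U n) ^+ 2) X ->
  \sum_(n <- zrange N) \sum_(j <- zrange M) v (n - j) * w (n - j) ^+ m * U j * U n <=
  2 ^+ m * (t * (2 * (X * 3)) + t^-1 * (2 * (eps * X))).
Proof.
move=> v_ge0 t_gt0 vK UX.
pose Xs n := (w n ^+ m * U n) ^+ 2; pose h n := (w n ^+ 2)^-1.
have pointwise n j : v (n - j) * w (n - j) ^+ m * U j * U n <=
    2 ^+ m * (t * (Xs j * h n + Xs n * h j) + t^-1 * (v (n - j) ^+ 2 * (Xs j + Xs n))).
  have wD : w (n - j) <= w j + w n by rewrite [w j + _]addrC jbr_subr_leD.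
  exact: highfreq_term_le m_gt0 (v_ge0 (n - j)) (U_ge0 j) (U_ge0 n) (jbr_ge1 j) (jbr_ge1 n)
    (jbr_ge0 _) wD t_gt0.
apply: le_trans (ler_sum _ (fun n _ => ler_sum _ (fun j _ => pointwise n j))) _.
under eq_bigr do rewrite -mulr_sumr big_split -!mulr_sumr /=.
rewrite -mulr_sumr big_split -!mulr_sumr /= ler_wpM2l ?exprn_ge0 //.
have Xs_ge0 n : 0 <= Xs n by exact: sqr_ge0.
have h_ge0 n : 0 <= h n by rewrite invr_ge0 exprn_ge0 // ltW // jbr_gt0.
apply: lerD; apply: ler_wpM2l.
- exact: ltW.
- exact: sum_prod_sym_le N M Xs_ge0 h_ge0 UX zsum_bounded_jbr_invsqr.
- by rewrite invr_ge0 ltW.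
- exact: sum_conv_sym_le N M (fun k => sqr_ge0 (v k)) Xs_ge0 vK UX.
Qed.

End FixedVector.

Lemma form_bound (W : int -> R) KV delta : (forall k, 0 <= W k) ->
  zsum_bounded (fun k => (W k / w k ^+ m) ^+ 2) KV -> 0 < delta ->
  exists C, 0 <= C /\ forall U : int -> R, (forall n, 0 <= U n) ->
    forall L X, zsum_bounded (fun n => U n ^+ 2) L ->
    zsum_bounded (fun n => (w n ^+ m * U n) ^+ 2) X ->
    forall N M, \sum_(n <- zrange N) \sum_(j <- zrange M) W (n - j) * U j * U n <=
      delta * X + C * L.
Proof.
move=> W_ge0 WK delta_gt0.
pose t := delta / (2 ^+ m * 8).
have t_gt0 : 0 < t by rewrite divr_gt0 ?mulr_gt0 ?exprn_gt0.
have [N0 tailK] := zsum_tail_small (fun k => sqr_ge0 (W k / w k ^+ m)) WK (exprn_gt0 2 t_gt0).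
pose Wlow k := if k \in zrange N0 then W k else 0.
pose v k := if k \in zrange N0 then 0 else W k / w k ^+ m.
have Wlow_ge0 k : 0 <= Wlow k by rewrite /Wlow; case: ifP.
have v_ge0 k : 0 <= v k by rewrite /v; case: ifP => // _; rewrite divr_ge0 ?exprn_ge0 ?jbr_ge0.
have W_split k : W k = Wlow k + v k * w k ^+ m.
  rewrite /Wlow /v; case: ifP => _; first by rewrite mul0r addr0.
  by rewrite add0r divfK // gt_eqF // exprn_gt0 // jbr_gt0.
have WlowK : zsum_bounded Wlow (\sum_(k <- zrange N0) W k).
  move=> N; rewrite -(@sum_if_mem _ (zrange N0) (zrange (maxn N N0))) ?zrange_uniq //;
    last exact: zrange_subset (leq_maxr N N0).
  by apply: sum_subset_le; rewrite ?zrange_uniq //; exact: zrange_subset (leq_maxl N N0).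
have vK : zsum_bounded (fun k => v k ^+ 2) (t ^+ 2).
  by move=> N; rewrite (eq_bigr _ (fun k _ => fun_if (fun x => x ^+ 2) _ _ _)) expr0n.
exists (2 * \sum_(k <- zrange N0) W k); split; first by rewrite mulr_ge0 ?sumr_ge0.
move=> U U_ge0 L X UL UX N M.
have -> : \sum_(n <- zrange N) \sum_(j <- zrange M) W (n - j) * U j * U n =
    \sum_(n <- zrange N) \sum_(j <- zrange M) Wlow (n - j) * U j * U n +
    \sum_(n <- zrange N) \sum_(j <- zrange M) v (n - j) * w (n - j) ^+ m * U j * U n.
  rewrite -big_split; apply: eq_bigr => n _; rewrite -big_split; apply: eq_bigr => j _.
  by rewrite W_split /=; ring.
have low := lowfreq_sum_le U_ge0 N M Wlow_ge0 WlowK UL.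
have high := highfreq_sum_le U_ge0 N M v_ge0 t_gt0 vK UX.
have -> : delta * X = 2 ^+ m * (t * (2 * (X * 3)) + t^-1 * (2 * (t ^+ 2 * X))).
  by rewrite /t; field; rewrite ?gt_eqF ?mulr_gt0 ?exprn_gt0.
by rewrite -[2 * _ * L]mulrA; lra.
Qed.

End FormBound.

Section ComplexSeries.
Variable R : realType.
Local Notation C := R[i].
Local Notation normc := (@Normc.normc R).
Local Notation "x %:C" := (real_complex R x).
Implicit Types (a : int -> C) (z : C).
Local Open Scope classical_set_scope.

Lemma norm_normc z : `|z| = (normc z)%:C.
Proof. by case: z. Qed.

Lemma normc_ge0 z : 0 <= normc z.
Proof. by rewrite -lecR -norm_normc normr_ge0. Qed.

Lemma normc_real (x : R) : normc x%:C = `|x|.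
Proof. by rewrite /Normc.normc /= expr0n /= addr0 sqrtr_sqr. Qed.

Lemma normc_conj z : normc z^*%C = normc z.
Proof. by apply: complexI; rewrite -!norm_normc normcJ. Qed.

Lemma normc_sum_le (s : seq int) a : normc (\sum_(n <- s) a n) <= \sum_(n <- s) normc (a n).
Proof.
elim: s => [|x s IH]; first by rewrite !big_nil Normc.normc0.
by rewrite !big_cons; apply: le_trans (le_normcD _ _) _; exact: lerD.
Qed.

Lemma normc_Re z : `|complex.Re z| <= normc z.
Proof.
case: z => x y; rewrite /Normc.normc /= -sqrtr_sqr; apply: ler_wsqrtr.
by rewrite lerDl sqr_ge0.
Qed.

Lemma normc_Im z : `|complex.Im z| <= normc z.
Proof.
case: z => x y; rewrite /Normc.normc /= -sqrtr_sqr; apply: ler_wsqrtr.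
by rewrite lerDr sqr_ge0.
Qed.

Lemma normc_le_ReIm z : normc z <= `|complex.Re z| + `|complex.Im z|.
Proof.
case: z => x y; rewrite /Normc.normc /=.
rewrite -[X in _ <= X]ger0_norm ?addr_ge0 // -sqrtr_sqr; apply: ler_wsqrtr.
rewrite sqrrD -[x ^+ 2](real_normK (num_real x)) -[y ^+ 2](real_normK (num_real y)).
by rewrite -addrA lerD2l lerDr mulrn_wge0 ?mulr_ge0.
Qed.

Lemma Re_sum (s : seq int) a : complex.Re (\sum_(n <- s) a n) = \sum_(n <- s) complex.Re (a n).
Proof.
elim: s => [|x s IH]; first by rewrite !big_nil.
by rewrite !big_cons -IH; case: (a x); case: (\sum_(n <- s) a n).
Qed.

Lemma Im_sum (s : seq int) a : complex.Im (\sum_(n <- s) a n) = \sum_(n <- s) complex.Im (a n).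
Proof.
elim: s => [|x s IH]; first by rewrite !big_nil.
by rewrite !big_cons -IH; case: (a x); case: (\sum_(n <- s) a n).
Qed.

Lemma complex_gt0 z : 0 < z -> exists2 r : R, 0 < r & z = r%:C.
Proof. by case: z => r s; rewrite ltcE /= => /andP[/eqP -> r_gt0]; exists r. Qed.

Lemma cvg_normc_le (s : nat -> C^o) (l : C^o) B : s @ \oo --> l ->
  (forall n, normc (s n) <= B) -> normc l <= B.
Proof.
move=> sl sB; rewrite leNgt; apply/negP => lt_Bl.
have e_gt0 : (0 : C) < (normc l - B)%:C by rewrite ltcR subr_gt0.
have [N _ HN] := (cvgrPdist_lt _ _).1 sl _ e_gt0.
have := HN N (leqnn N); rewrite /= norm_normc ltcR.
have := le_normcD (l - s N) (s N); rewrite subrK.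
by have := sB N; lra.
Qed.

Lemma cvg_real_complex (r : nat -> R) (l : R) : r @ \oo --> l ->
  ((fun n => (r n)%:C) : nat -> C^o) @ \oo --> (l%:C : C^o).
Proof.
move=> rl; apply/cvgrPdist_lt => _ /complex_gt0[e e_gt0 ->].
near=> N; rewrite /= -rmorphB norm_normc normc_real ltcR; near: N.
exact: (cvgrPdist_lt _ _).1 rl _ e_gt0.
Unshelve. all: by end_near.
Qed.

Lemma cvg_complex (s : nat -> C^o) (x y : R) :
  (fun n => complex.Re (s n)) @ \oo --> x -> (fun n => complex.Im (s n)) @ \oo --> y ->
  s @ \oo --> ((x +i* y)%C : C^o).
Proof.
move=> Rex Imy; apply/cvgrPdist_lt => _ /complex_gt0[e e_gt0 ->].
have e2_gt0 : 0 < e / 2 by rewrite divr_gt0.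
near=> N.
have Re_near : `|x - complex.Re (s N)| < e / 2.
  by near: N; exact: (cvgrPdist_lt _ _).1 Rex _ e2_gt0.
have Im_near : `|y - complex.Im (s N)| < e / 2.
  by near: N; exact: (cvgrPdist_lt _ _).1 Imy _ e2_gt0.
rewrite norm_normc ltcR; apply: le_lt_trans (normc_le_ReIm _) _.
by move: Re_near Im_near; case: (s N) => a b /=; lra.
Unshelve. all: by end_near.
Qed.

Lemma zpsum_real_cvg (g : int -> R) K : zsum_bounded (fun n => `|g n|) K ->
  cvgn (fun N => \sum_(n <- zrange N) g n).
Proof.
move=> gK.
have pos_ge0 n : 0 <= `|g n| + g n by have := ler_norm (- g n); rewrite normrN; lra.
have posK : zsum_bounded (fun n => `|g n| + g n) (K + K).
  move=> N; rewrite big_split /=; apply: lerD => //.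
  by apply: le_trans (gK N); apply: ler_sum => n _; exact: ler_norm.
have [pos_cvg _] := zsum_bounded_cvg pos_ge0 posK.
have [abs_cvg _] := zsum_bounded_cvg (fun n => normr_ge0 (g n)) gK.
have -> : (fun N => \sum_(n <- zrange N) g n) =
    (fun N => \sum_(n <- zrange N) (`|g n| + g n)) - (fun N => \sum_(n <- zrange N) `|g n|).
  by apply/funext => N; rewrite !fctE -sumrB; apply: eq_bigr => n _; lra.
exact: is_cvgB.
Qed.

Lemma zsumE a (l : C^o) : (zpsum a : nat -> C^o) @ \oo --> l -> zsum a = l.
Proof. exact: cvg_lim. Qed.

Lemma zsum_cvg a K : zsum_bounded (fun n => normc (a n)) K ->
  (zpsum a : nat -> C^o) @ \oo --> (zsum a : C^o).
Proof.
move=> aK.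
have Re_cvg : cvgn (fun N => \sum_(n <- zrange N) complex.Re (a n)).
  apply: (zpsum_real_cvg (K := K)) => N; apply: le_trans (aK N).
  by apply: ler_sum => n _; exact: normc_Re.
have Im_cvg : cvgn (fun N => \sum_(n <- zrange N) complex.Im (a n)).
  apply: (zpsum_real_cvg (K := K)) => N; apply: le_trans (aK N).
  by apply: ler_sum => n _; exact: normc_Im.
suff cv : (zpsum a : nat -> C^o) @ \oo -->
    ((limn (fun N => \sum_(n <- zrange N) complex.Re (a n)) +i*
      limn (fun N => \sum_(n <- zrange N) complex.Im (a n)))%C : C^o).
  by rewrite (zsumE cv).
apply: cvg_complex.
  by under eq_fun do rewrite zpsumE Re_sum.
by under eq_fun do rewrite zpsumE Im_sum.
Qed.

Lemma normc_zsum_le a K : zsum_bounded (fun n => normc (a n)) K -> normc (zsum a) <= K.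
Proof.
move=> aK; apply: cvg_normc_le (zsum_cvg aK) _ => N.
by rewrite zpsumE; apply: le_trans (normc_sum_le _ _) (aK N).
Qed.

Lemma zsum_real (f : int -> R) K : (forall n, 0 <= f n) -> zsum_bounded f K ->
  exists l, zsum (fun n => (f n)%:C) = l%:C /\ zsum_bounded f l.
Proof.
move=> f_ge0 fK; have [cv le_lim] := zsum_bounded_cvg f_ge0 fK.
exists (limn (fun N => \sum_(n <- zrange N) f n)); split => //; apply: zsumE.
have -> : zpsum (fun n => (f n)%:C) = (fun N => (\sum_(n <- zrange N) f n)%:C).
  by apply/funext => N; rewrite zpsumE rmorph_sum.
exact: cvg_real_complex.
Qed.

End ComplexSeries.

Section SobolevWeights.
Variables (R : realType) (m : nat).
Local Notation w := (@jbr R).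

Lemma freqX_abs (n : int) : (n%:~R * pi) ^+ (2 * m) = ((absz n)%:R * pi) ^+ (2 * m) :> R.
Proof.
have sqr_abs (x : R) : x ^+ 2 = `|x| ^+ 2 by rewrite real_normK // num_real.
rewrite !exprM (sqr_abs (n%:~R * pi)) (sqr_abs (_ * pi)) !normrM normr_nat.
by rewrite -intr_norm -abszE.
Qed.

Lemma freqX_le_jbrX (n : int) : (n%:~R * pi) ^+ (2 * m) <= pi ^+ (2 * m) * w n ^+ (2 * m) :> R.
Proof.
rewrite freqX_abs -exprMn [pi * _]mulrC; apply: lerXn2r; rewrite ?nnegrE ?mulr_ge0 ?pi_ge0 //.
  by rewrite jbr_ge0.
by rewrite ler_wpM2r ?pi_ge0 // /jbr lerDl.
Qed.

Lemma jbrX_le_freqX (n : int) : w n ^+ (2 * m) <= 4 ^+ m * ((n%:~R * pi) ^+ (2 * m) + 1) :> R.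
Proof.
rewrite freqX_abs /jbr; set a := (absz n)%:R : R.
have a_ge0 : 0 <= a by rewrite /a ler0n.
have pi_ge1 : 1 <= pi :> R by apply: le_trans (pi_ge2 R); rewrite ler1n.
have four : 4 ^+ m = 2 ^+ (2 * m) :> R by rewrite exprM; congr (_ ^+ _); rewrite expr2; lra.
have aX_ge0 : 0 <= (a * pi) ^+ (2 * m) by rewrite exprn_ge0 // mulr_ge0 ?pi_ge0.
have [a_le1|a_gt1] := leP a 1.
  apply: (le_trans (y := 2 ^+ (2 * m))).
    by apply: lerXn2r; rewrite ?nnegrE; lra.
  by rewrite -four -[X in X <= _]mulr1 ler_wpM2l ?exprn_ge0 //; lra.
apply: (le_trans (y := (2 * (a * pi)) ^+ (2 * m))).
  by apply: lerXn2r; rewrite ?nnegrE; nra.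
by rewrite exprMn -four ler_wpM2l ?exprn_ge0 //; lra.
Qed.

Section FixedVector.
Variable U : int -> R.

Lemma zsum_bounded_sqr X : zsum_bounded (fun n => (w n ^+ m * U n) ^+ 2) X ->
  zsum_bounded (fun n => U n ^+ 2) X.
Proof.
move=> UX N; apply: le_trans (UX N); apply: ler_sum => n _.
by rewrite exprMn ler_peMl ?sqr_ge0 // exprn_ege1 // exprn_ege1 // jbr_ge1.
Qed.

Lemma zsum_bounded_freqX X : zsum_bounded (fun n => (w n ^+ m * U n) ^+ 2) X ->
  zsum_bounded (fun n => (n%:~R * pi) ^+ (2 * m) * U n ^+ 2) (pi ^+ (2 * m) * X).
Proof.
move=> UX N; have := ler_wpM2l (exprn_ge0 (2 * m) (@pi_ge0 R)) (UX N); apply: le_trans.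
rewrite mulr_sumr; apply: ler_sum => n _.
rewrite [(_ * U n) ^+ 2]exprMn -exprM [(m * 2)%N]mulnC [pi ^+ _ * _]mulrA.
by apply: ler_wpM2r; [exact: sqr_ge0 | exact: freqX_le_jbrX].
Qed.

Lemma zsum_bounded_jbrX T L :
  zsum_bounded (fun n => (n%:~R * pi) ^+ (2 * m) * U n ^+ 2) T ->
  zsum_bounded (fun n => U n ^+ 2) L ->
  zsum_bounded (fun n => (w n ^+ m * U n) ^+ 2) (4 ^+ m * (T + L)).
Proof.
move=> UT UL N.
have four_ge0 : 0 <= 4 ^+ m :> R by rewrite exprn_ge0.
have := ler_wpM2l four_ge0 (lerD (UT N) (UL N)); apply: le_trans.
rewrite -big_split mulr_sumr; apply: ler_sum => n _ /=.
have -> : (w n ^+ m * U n) ^+ 2 = w n ^+ (2 * m) * U n ^+ 2 by rewrite exprMn -exprM mulnC.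
have -> : 4 ^+ m * ((n%:~R * pi) ^+ (2 * m) * U n ^+ 2 + U n ^+ 2) =
    4 ^+ m * ((n%:~R * pi) ^+ (2 * m) + 1) * U n ^+ 2 by ring.
by apply: ler_wpM2r; [exact: sqr_ge0 | exact: jbrX_le_freqX].
Qed.

End FixedVector.

End SobolevWeights.

Section Forms.
Variable R : realType.
Local Notation C := R[i].
Local Notation normc := (@Normc.normc R).
Local Notation "x %:C" := (real_complex R x).
Local Open Scope classical_set_scope.

Lemma jb_jbr (n : int) : jb R n = (jbr n)%:C.
Proof. by rewrite /jb /jbr -abszE intrD rmorphD addrC rmorph_nat. Qed.

Lemma nondecreasing_cvg_complex_bounded (p : nat -> R) : nondecreasing_seq p ->
  cvgn ((fun N => (p N)%:C) : nat -> C^o) -> exists K, forall N, p N <= K.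
Proof.
move=> p_incr /cvg_ex[l pl].
have [N1 _ HN1] := (cvgrPdist_lt _ _).1 pl _ (ltr01 : (0 : C) < 1).
exists (normc l + 1) => N.
have : normc (l - (p (maxn N N1))%:C) < 1.
  by rewrite -ltcR -norm_normc; exact: HN1 (leq_maxr _ _).
have := le_normcD l (- (l - (p (maxn N N1))%:C)).
rewrite normcN opprB addrC subrK normc_real.
have := ler_norm (p (maxn N N1)); have := p_incr _ _ (leq_maxl N N1).
lra.
Qed.

Lemma Hs_zsum_bounded neg s (f : int -> C) : Hs neg s f ->
  exists K, zsum_bounded (fun n => jbr n ^ (2 * s) * normc (f n) ^+ 2) K.
Proof.
move=> [_ f_cvg].
apply: nondecreasing_cvg_complex_bounded.
  move=> N M le_NM; apply: sum_subset_le; rewrite ?zrange_uniq //; first exact: zrange_subset.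
  move=> n; rewrite mulr_ge0 ?sqr_ge0 //.
  exact: exprz_ge0 (jbr_ge0 n).
suff -> : (fun N => (\sum_(n <- zrange N) jbr n ^ (2 * s) * normc (f n) ^+ 2)%:C) =
    zpsum (fun n => jb R n ^ (2 * s) * `|f n| ^+ 2) by [].
apply/funext => N; rewrite zpsumE rmorph_sum; apply: eq_bigr => n _.
by rewrite jb_jbr norm_normc rmorphM fmorphXz rmorphXn.
Qed.

Lemma Hs_neg_bounded m (V : int -> C) : Hs false (- m%:Z) V ->
  exists K, zsum_bounded (fun k => (normc (V k) / jbr k ^+ m) ^+ 2) K.
Proof.
move=> /Hs_zsum_bounded[K VK]; exists K => N; apply: le_trans (VK N).
rewrite le_eqVlt; apply/orP; left; apply/eqP; apply: eq_bigr => n _.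
rewrite (_ : 2 * - m%:Z = - (2 * m)%N%:Z); last by rewrite mulrN PoszM.
by rewrite -exprnN expr_div_n -exprM [(m * 2)%N]mulnC mulrC.
Qed.

Lemma Hs_pos_bounded neg m (u : int -> C) : Hs neg m%:Z u ->
  exists K, zsum_bounded (fun k => (jbr k ^+ m * normc (u k)) ^+ 2) K.
Proof.
move=> /Hs_zsum_bounded[K uK]; exists K => N; apply: le_trans (uK N).
rewrite le_eqVlt; apply/orP; left; apply/eqP; apply: eq_bigr => n _.
rewrite (_ : 2 * m%:Z = (2 * m)%N%:Z); last by rewrite PoszM.
by rewrite -exprnP exprMn -exprM [(m * 2)%N]mulnC.
Qed.

Lemma L2norm2_real (u : int -> C) K : zsum_bounded (fun n => normc (u n) ^+ 2) K ->
  exists L, L2norm2 u = L%:C /\ zsum_bounded (fun n => normc (u n) ^+ 2) L.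
Proof.
move=> uK; have [L [eqL uL]] := zsum_real (fun n => sqr_ge0 (normc (u n))) uK.
exists L; split => //; rewrite -eqL /L2norm2 /pairing; congr zsum; apply/funext => n.
by rewrite -sqr_normc norm_normc rmorphXn.
Qed.

Lemma tau_real m (u : int -> C) K :
  zsum_bounded (fun n => (n%:~R * pi) ^+ (2 * m) * normc (u n) ^+ 2) K ->
  exists T, tau m u = T%:C /\
    zsum_bounded (fun n => (n%:~R * pi) ^+ (2 * m) * normc (u n) ^+ 2) T.
Proof.
move=> uK.
have term_ge0 n : 0 <= (n%:~R * pi) ^+ (2 * m) * normc (u n) ^+ 2 :> R.
  by rewrite mulr_ge0 ?sqr_ge0 // exprM exprn_ge0 // sqr_ge0.
have [T [eqT uT]] := zsum_real term_ge0 uK.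
exists T; split => //; rewrite -eqT /tau /pairing; congr zsum; apply/funext => n.
by rewrite /D2m -mulrA -sqr_normc norm_normc -rmorphXn -rmorphM.
Qed.

Lemma normc_tV_le m (V u : int -> C) KV X B :
  zsum_bounded (fun k => (normc (V k) / jbr k ^+ m) ^+ 2) KV ->
  zsum_bounded (fun k => (jbr k ^+ m * normc (u k)) ^+ 2) X ->
  (forall N M, \sum_(n <- zrange N) \sum_(j <- zrange M)
     normc (V (n - j)) * normc (u j) * normc (u n) <= B) ->
  normc (tV V u) <= B.
Proof.
move=> VK uX sumB.
pose row n M := \sum_(j <- zrange M) normc (V (n - j)) * normc (u j).
have row_cvg n : cvgn (row n) /\
    zsum_bounded (fun j => normc (V (n - j)) * normc (u j)) (limn (row n)).
  apply: zsum_bounded_cvg => [j|]; first by rewrite mulr_ge0 ?normc_ge0.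
  exact: conv_row_bounded (fun k => normc_ge0 _) (fun k => normc_ge0 _) VK uX.
have mulV_le n : normc (mulV V u n) <= limn (row n).
  apply: normc_zsum_le => M; under eq_bigr do rewrite Normc.normcM.
  exact: (row_cvg n).2.
have rows_le N : \sum_(n <- zrange N) limn (row n) * normc (u n) <= B.
  have cv : (fun M => \sum_(n <- zrange N) row n M * normc (u n)) @ \oo -->
      \sum_(n <- zrange N) limn (row n) * normc (u n).
    apply: (cvg_big (P := xpredT) add_continuous) => n _.
    exact: cvgMl (row_cvg n).1.
  rewrite -(cvg_lim _ cv) //; apply: limr_le; first exact: cvgP cv.
  by apply: nearW => M; under eq_bigr do rewrite mulr_suml; exact: sumB.
apply: normc_zsum_le => N; apply: le_trans (rows_le N); apply: ler_sum => n _.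
by rewrite Normc.normcM normc_conj ler_wpM2r ?normc_ge0.
Qed.

End Forms.

Theorem proposition1 (R : realType) (m : nat) (V : int -> R[i]) :
  (0 < m)%N ->
  Hs false (- (m%:Z)) V ->
  forall neg : bool,
  forall delta : R, 0 < delta ->
  exists Cd : R, 0 <= Cd /\
    forall u : int -> R[i], Hs neg (m%:Z) u ->
      `| tV V u | <= real_complex R delta * tau m u + real_complex R Cd * L2norm2 u.
Proof.
move=> m_gt0 HV neg delta delta_gt0.
have [KV VK] := Hs_neg_bounded HV.
have delta'_gt0 : 0 < delta / 4 ^+ m by rewrite divr_gt0 ?exprn_gt0.
have [C [C_ge0 HC]] := form_bound m_gt0 (fun k => normc_ge0 (V k)) VK delta'_gt0.
exists (C + delta); split; first by rewrite addr_ge0 // ltW.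
move=> u Hu; have [X uX] := Hs_pos_bounded Hu.
have [L [-> uL]] := L2norm2_real (zsum_bounded_sqr uX).
have [T [-> uT]] := tau_real (zsum_bounded_freqX uX).
rewrite norm_normc -!rmorphM -rmorphD lecR.
apply: normc_tV_le VK uX _ => N M.
apply: le_trans (HC _ (fun n => normc_ge0 (u n)) _ _ uL (zsum_bounded_jbrX uT uL) N M) _.
rewrite mulrA divfK ?expf_neq0 //; lra.
Qed.
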